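(* For integers $t\ge 1$ and $m>t$ (with $m$ sufficiently large) and a fixed integer constant $c\ge 3$, there exists a binary $t$-break-resilient code $\mathcal{C}\subseteq\{0,1\}^n$ of length $n=m+(6+2\log\log m)\cdot 3c\log m\cdot t+c\log m$ with $\log|\mathcal{C}|\ge m-o(1)$; consequently its redundancy satisfies $n-\log|\mathcal{C}|=O(t\log n\log\log n)$.
   Context: Logarithms are base 2. Breaking a binary string $\mathbf{x}\in\{0,1\}^n$ at $s\le t$ positions means choosing $s$ cut points between consecutive entries, producing $s+1$ consecutive substrings called fragments; fragments are oriented (read left to right as in $\mathbf{x}$) but given to the decoder as an unordered multiset. A code $\mathcal{C}\subseteq\{0,1\}^n$ is a $t$-break-resilient code ($t$-BRC) if every codeword can be uniquely recovered from the unordered multiset of fragments resulting from any at most $t$ breaks (equivalently, no two distinct codewords, each broken at at most $t$ positions, yield the same fragment multiset). The redundancy of $\mathcal{C}$ is $n-\log|\mathcal{C}|$. *)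

From mathcomp Require Import all_boot.
From Stdlib Require Import Reals.
Set Implicit Arguments. Unset Strict Implicit. Unset Printing Implicit Defensive.

(* fs is a way of breaking x at at most t positions: the fragments are the
   nonempty consecutive substrings (in order) whose concatenation is x, and
   there are at most t+1 of them (s <= t cut points give s+1 fragments). *)
Definition breaking (t : nat) (x : seq bool) (fs : seq (seq bool)) : bool :=
  [&& all (fun f => f != [::]) fs, flatten fs == x,
      0 < size fs & size fs <= t.+1].

Definition is_tBRC (n t : nat) (C : {set n.-tuple bool}) : Prop :=
  forall x y : n.-tuple bool, x \in C -> y \in C ->
  forall fs gs : seq (seq bool),
    breaking t (val x) fs -> breaking t (val y) gs -> perm_eq fs gs -> x = y.

Definition log2 (x : R) : R := (ln x / ln 2)%R.

(* integer version of log m: ceil(log2 m) *)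
Definition lg (m : nat) : nat := up_log 2 m.

Definition brc_len (c t m : nat) : nat :=
  m + (6 + 2 * lg (lg m)) * (3 * c * lg m) * t + c * lg m.

(* Gilbert-Varshamov argument.  Call x, y confusable when some breakings of x
   and y into at most t+1 fragments give the same multiset.  Every fragment of
   y is then an infix of x, so y is a concatenation of at most t+1 infixes of
   x, each fixed by its start and length: x has at most (n+1)^(2(t+1))
   confusable words.  A greedily chosen independent set of the confusability
   graph is a t-BRC of size at least 2^n / ((n+1)^(2(t+1)) + 1).  For
   n = brc_len c t m the added redundancy, of order c t log m log log m,
   exceeds 2(t+1) log(n+1), so the code has at least 2^m words, and its
   redundancy is at most 2(t+1)(1 + log n) <= 8 t log n log log n. *)
From mathcomp Require Import all_boot zify.
From Stdlib Require Import Reals Lra ClassicalEpsilon.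
(* Stdlib rebinds [^] on nat to [Nat.pow]; restore ssrnat's [expn]. *)
Import ssrnat.

Set Implicit Arguments.
Unset Strict Implicit.
Unset Printing Implicit Defensive.

Section IndependentSet.

Variables (T : finType) (E : rel T) (D : nat).
Hypothesis symE : symmetric E.
Hypothesis degE : forall x, #|[set y | E x y]| <= D.

Lemma exists_independent_subset (A : {set T}) :
  exists C : {set T}, [/\ C \subset A, {in C &, forall x y, x != y -> ~~ E x y}
                        & #|A| <= #|C| * D.+1].
Proof.
have [n] := ubnP #|A|; elim: n A => // n IH A ltAn.
have [->|[x Ax]] := set_0Vmem A.
  by exists set0; rewrite sub0set cards0; split=> // y z; rewrite inE.
pose B := x |: [set y | E x y].
have [|C [subC indC cardC]] := IH (A :\: B).
  suff: #|A :\: B| < #|A| by lia.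
  apply/proper_card/properP; split; first exact: subsetDl.
  by exists x; rewrite // !inE eqxx.
have nEC : {in C, forall y, ~~ E x y}.
  by move=> y /(subsetP subC); rewrite !inE negb_or => /andP[/andP[_ ->]].
have xC : x \notin C by apply/negP => /(subsetP subC); rewrite !inE eqxx.
exists (x |: C); split.
- by rewrite subUset sub1set Ax (subset_trans subC) ?subsetDl.
- move=> y z; rewrite !inE => /predU1P[->|Cy] /predU1P[->|Cz] neq_yz.
  + by rewrite eqxx in neq_yz.
  + exact: nEC.
  + by rewrite symE nEC.
  + exact: indC.
- have cardB : #|B| <= D.+1 by rewrite cardsU1; have := degE x; case: (_ \notin _) => /=; lia.
  have cardAB : #|A :&: B| <= #|B| by rewrite subset_leq_card ?subsetIr.
  by move: (cardsD A B); rewrite cardsU1 xC; lia.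
Qed.

End IndependentSet.

Definition confusable t n (x y : n.-tuple bool) : Prop :=
  exists fs gs, [/\ breaking t x fs, breaking t y gs & perm_eq fs gs].

Definition confusableb t n (x y : n.-tuple bool) : bool :=
  if excluded_middle_informative (confusable t x y) then true else false.

Lemma confusableP t n (x y : n.-tuple bool) :
  reflect (confusable t x y) (confusableb t x y).
Proof. by rewrite /confusableb; case: excluded_middle_informative; constructor. Qed.

Lemma confusableb_sym t n : symmetric (@confusableb t n).
Proof.
by move=> x y; apply/confusableP/confusableP => -[fs [gs [bx bY pfg]]];
  exists gs, fs; rewrite perm_sym.
Qed.

Lemma independent_tBRC t n (C : {set n.-tuple bool}) :
  {in C &, forall x y, x != y -> ~~ confusableb t x y} -> is_tBRC t C.
Proof.
move=> indC x y Cx Cy fs gs bx bY pfg.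
case: (eqVneq x y) => // /(indC _ _ Cx Cy)/negP[].
by apply/confusableP; exists fs, gs.
Qed.

Lemma infix_flatten (T : eqType) (ss : seq (seq T)) s :
  s \in ss -> infix s (flatten ss).
Proof. by case/splitPr=> ss1 ss2; rewrite flatten_cat /= infix_infix. Qed.

Lemma flatten_nth_enum_ord (T : Type) k (ss : seq (seq T)) : size ss <= k ->
  flatten [seq nth [::] ss i | i : 'I_k <- enum 'I_k] = flatten ss.
Proof.
move=> le_ss_k.
have -> : [seq nth [::] ss i | i : 'I_k <- enum 'I_k] = map (nth [::] ss) (iota 0 k).
  by rewrite -val_enum_ord -map_comp.
rewrite -(subnKC le_ss_k) iotaD map_cat flatten_cat map_nth_iota0 // take_size.
set tail := iota _ _.
have -> : map (nth [::] ss) tail = map (fun=> [::]) tail.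
  by apply/eq_in_map => i; rewrite mem_iota => /andP[/(nth_default [::])->].
by elim: tail => [|_ tail /= ->] /=; rewrite ?cats0.
Qed.

(* (d i).1 and (d i).2 are the start and the length of the i-th infix. *)
Definition concat_infixes (T : Type) n k (x : seq T)
    (d : {ffun 'I_k -> 'I_n.+1 * 'I_n.+1}) : seq T :=
  flatten [seq take (d i).2 (drop (d i).1 x) | i <- enum 'I_k].

Lemma concat_infixesP (T : eqType) n k (x : seq T) (ss : seq (seq T)) :
  size x <= n -> size ss <= k -> all (fun s => infix s x) ss ->
  exists d : {ffun 'I_k -> 'I_n.+1 * 'I_n.+1}, concat_infixes x d = flatten ss.
Proof.
move=> le_xn le_ss_k /allP infix_ss.
pose g (i : 'I_k) := nth [::] ss i.
have infix_g i : infix (g i) x.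
  rewrite /g; case: (ltnP i (size ss)) => [/(mem_nth [::])/infix_ss //|].
  by move/(nth_default [::])->; rewrite infix0s.
exists [ffun i => (inord (infix_index (g i) x), inord (size (g i)))].
rewrite /concat_infixes -(flatten_nth_enum_ord le_ss_k); congr flatten.
apply: eq_map => i; rewrite ffunE /= !inordK ?ltnS.
- by apply/eqP; rewrite -infixE.
- by rewrite (leq_trans _ le_xn) ?infixTindex.
- exact: leq_trans (size_infix (infix_g i)) le_xn.
Qed.

Lemma card_confusable t n (x : n.-tuple bool) :
  #|[set y | confusableb t x y]| <= n.+1 ^ (2 * t.+1).
Proof.
pose decode (d : {ffun 'I_t.+1 -> 'I_n.+1 * 'I_n.+1}) : n.-tuple bool :=
  insubd x (concat_infixes x d).
apply: leq_trans (_ : #|decode @: setT| <= _); last first.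
  by rewrite (leq_trans (leq_imset_card _ _)) // cardsT card_ffun card_prod
             !card_ord mulnn -expnM.
apply/subset_leq_card/subsetP => y; rewrite inE => /confusableP[fs [gs []]].
move=> /and4P[_ /eqP flat_fs _ _] /and4P[_ /eqP flat_gs _ size_gs] pfg.
have infix_gs : all (fun g => infix g x) gs.
  by apply/allP => g; rewrite -(perm_mem pfg) -flat_fs; apply: infix_flatten.
have [d dE] := concat_infixesP (eq_leq (size_tuple x)) size_gs infix_gs.
apply/imsetP; exists d; rewrite ?inE //; apply: val_inj.
by rewrite insubdK -?topredE /= dE flat_gs ?size_tuple.
Qed.

Lemma exists_tBRC_card n t : exists C : {set n.-tuple bool},
  is_tBRC t C /\ 2 ^ n <= #|C| * (n.+1 ^ (2 * t.+1)).+1.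
Proof.
have [C [_ indC cardC]] :=
  exists_independent_subset (@confusableb_sym t n) (@card_confusable t n) setT.
exists C; split; first exact: independent_tBRC.
by rewrite cardsT card_tuple card_bool in cardC.
Qed.

Lemma cube_le_exp2 a : 10 <= a -> a ^ 3 <= 2 ^ a.
Proof.
elim: a => // a IH; rewrite leq_eqVlt => /predU1P[<- // | ge_a10].
have le_succ : a.+1 ^ 3 <= 2 * a ^ 3 by rewrite !expnS expn0; nia.
by rewrite (expnS 2) (leq_trans le_succ) ?leq_mul2l ?IH.
Qed.

Lemma lg_ge k m : 2 ^ k <= m -> k <= lg m.
Proof. by move=> le_km; rewrite -(@leq_exp2l 2) // (leq_trans le_km) ?up_logP. Qed.

Lemma lg_le n : lg n <= n.
Proof. by apply: up_log_min => //; apply/ltnW/ltn_expl. Qed.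

Lemma brc_len_gt c t m : 0 < c -> 0 < lg m -> m + 8 * lg m * t < brc_len c t m.
Proof. by rewrite /brc_len; move: (lg m) (lg (lg m)) => a b; nia. Qed.

Lemma brc_len_lt c t m : (24 * t + 1) * c + 10 <= lg m ->
  brc_len c t m < m + 2 ^ lg m.
Proof.
rewrite /brc_len => le_a.
have := cube_le_exp2 (leq_trans (leq_addl _ _) le_a).
have := lg_le (lg m); move: (lg m) (lg (lg m)) le_a => a b le_a le_ba.
rewrite !expnS expn0 muln1; nia.
Qed.

Lemma exp2_brc_len_ge c t m : 0 < c -> 0 < t -> 2 ^ ((24 * t + 1) * c + 10) <= m ->
  2 ^ m * ((brc_len c t m).+1 ^ (2 * t.+1)).+1 <= 2 ^ brc_len c t m.
Proof.
move=> c_gt0 t_gt0 /lg_ge le_a.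
have a_gt0 : 0 < lg m by lia.
have le_ma : m <= 2 ^ lg m by apply: up_logP.
have ltN := brc_len_lt le_a; have gtN := brc_len_gt t c_gt0 a_gt0.
set a := lg m in le_a a_gt0 le_ma ltN gtN *; set N := brc_len c t m in ltN gtN *.
have le_N1 : N.+1 <= 2 ^ a.+1 by rewrite expnS; lia.
have le_D : N.+1 ^ (2 * t.+1) <= 2 ^ (8 * a * t).
  apply: leq_trans (_ : (2 ^ a.+1) ^ (2 * t.+1) <= _); first by rewrite leq_exp2r.
  by rewrite -expnM leq_exp2l //; nia.
have -> : 2 ^ N = 2 ^ m * 2 ^ (N - m) by rewrite -expnD subnKC //; lia.
rewrite leq_pmul2l ?expn_gt0 //.
apply: leq_trans (_ : 2 ^ (8 * a * t).+1 <= _); last by rewrite leq_exp2l //; lia.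
by rewrite expnS; have := expn_gt0 2 (8 * a * t); lia.
Qed.

Open Scope R_scope.

Lemma ln2_gt0 : 0 < ln 2.
Proof. by have := ln_lt_2; lra. Qed.

Lemma log2_le x y : 0 < x -> x <= y -> log2 x <= log2 y.
Proof.
move=> x_gt0 /Rle_lt_or_eq_dec[lt_xy|->]; last exact: Rle_refl.
apply: Rmult_le_compat_r; first by left; apply/Rinv_0_lt_compat/ln2_gt0.
by left; apply: ln_increasing.
Qed.

Lemma log2_mult x y : 0 < x -> 0 < y -> log2 (x * y) = log2 x + log2 y.
Proof. by move=> x_gt0 y_gt0; rewrite /log2 ln_mult //; field; apply/Rgt_not_eq/ln2_gt0. Qed.

Lemma log2_pow x k : 0 < x -> log2 (x ^ k) = INR k * log2 x.
Proof. by move=> x_gt0; rewrite /log2 ln_pow //; field; apply/Rgt_not_eq/ln2_gt0. Qed.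

Lemma log2_2 : log2 2 = 1.
Proof. by rewrite /log2; field; apply/Rgt_not_eq/ln2_gt0. Qed.

Lemma INR_expn m k : INR (m ^ k) = INR m ^ k.
Proof. by elim: k => // k IH; rewrite expnS -multE mult_INR IH. Qed.

Lemma INR_gt0 n : (0 < n)%N -> 0 < INR n.
Proof. by move/ltP; apply: lt_0_INR. Qed.

Lemma log2_INR_mul a b : (0 < a)%N -> (0 < b)%N ->
  log2 (INR (a * b)) = log2 (INR a) + log2 (INR b).
Proof. by move=> a_gt0 b_gt0; rewrite -multE mult_INR log2_mult //; apply: INR_gt0. Qed.

Lemma log2_INR_exp a k : (0 < a)%N -> log2 (INR (a ^ k)) = INR k * log2 (INR a).
Proof. by move=> a_gt0; rewrite INR_expn log2_pow //; apply: INR_gt0. Qed.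

Lemma log2_INR_exp2 k : log2 (INR (2 ^ k)) = INR k.
Proof.
rewrite log2_INR_exp // (_ : INR 2 = 2); last by rewrite /=; lra.
by rewrite log2_2 Rmult_1_r.
Qed.

Lemma log2_INR_le a b : (0 < a)%N -> (a <= b)%N -> log2 (INR a) <= log2 (INR b).
Proof. by move=> a_gt0 /leP le_ab; apply: log2_le; [apply: INR_gt0 | apply: le_INR]. Qed.

Lemma le_log2_INR k S : (2 ^ k <= S)%N -> INR k <= log2 (INR S).
Proof. by rewrite -log2_INR_exp2; apply: log2_INR_le; rewrite expn_gt0. Qed.

Lemma redundancy_le S N t : (0 < t)%N -> (4 <= N)%N ->
  (2 ^ N <= S * (N.+1 ^ (2 * t.+1)).+1)%N ->
  INR N - log2 (INR S) <= 8 * INR t * log2 (INR N) * log2 (log2 (INR N)).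
Proof.
move=> t_gt0 N_ge4 le_2N.
have S_gt0 : (0 < S)%N by case: S le_2N; rewrite ?mul0n ?leqn0 ?expn_eq0.
have le_D : ((N.+1 ^ (2 * t.+1)).+1 <= (2 * N) ^ (2 * t.+1))%N.
  by rewrite ltn_exp2r //; lia.
have N_le : INR N <= log2 (INR (S * (2 * N) ^ (2 * t.+1))).
  rewrite -log2_INR_exp2; apply: log2_INR_le; first by rewrite expn_gt0.
  by rewrite (leq_trans le_2N) // leq_mul2l le_D orbT.
have N_gt0 : (0 < N)%N by lia.
rewrite log2_INR_mul ?log2_INR_exp ?log2_INR_mul ?(log2_INR_exp2 1) ?expn_gt0
  ?muln_gt0 ?N_gt0 // in N_le.
have L_ge2 : 2 <= log2 (INR N) by have := le_log2_INR (N_ge4 : 2 ^ 2 <= N)%N.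
have LL_ge1 : 1 <= log2 (log2 (INR N)) by rewrite -log2_2; apply: log2_le; lra.
have t_ge1 : 1 <= INR t by apply: (le_INR 1); apply/leP.
rewrite -multE mult_INR (S_INR t) /= in N_le.
have : 8 * INR t * log2 (INR N) <= 8 * INR t * log2 (INR N) * log2 (log2 (INR N)).
  by rewrite -{1}(Rmult_1_r (_ * _)); apply: Rmult_le_compat_l; nra.
nra.
Qed.

Close Scope R_scope.

Theorem corollary1 (c : nat) (hc : 3 <= c) :
  exists K : R,
  forall t : nat, 1 <= t ->
  exists eps : nat -> R, Un_cv eps 0%R /\
  exists M : nat, forall m : nat, M <= m -> t < m ->
  exists C : {set (brc_len c t m).-tuple bool},
    is_tBRC t C /\
    (INR m - eps m <= log2 (INR #|C|))%R /\
    (INR (brc_len c t m) - log2 (INR #|C|)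
       <= K * INR t * log2 (INR (brc_len c t m))
            * log2 (log2 (INR (brc_len c t m))))%R.
Proof.
exists 8%R => t t_gt0; exists (fun=> 0%R); split.
  by move=> e e_gt0; exists 0 => k _; rewrite /R_dist Rminus_0_r Rabs_R0.
exists (2 ^ ((24 * t + 1) * c + 10)) => m le_Mm _.
have c_gt0 : 0 < c by lia.
have le_2N := exp2_brc_len_ge c_gt0 t_gt0 le_Mm.
have [C [brcC le_2C]] := exists_tBRC_card (brc_len c t m) t.
exists C; split=> //; split.
- rewrite Rminus_0_r; apply: le_log2_INR.
  rewrite -(leq_pmul2r (ltn0Sn ((brc_len c t m).+1 ^ (2 * t.+1)))).
  exact: leq_trans le_2N le_2C.
- apply: redundancy_le => //.
  have : 2 ^ 2 <= m by rewrite (leq_trans _ le_Mm) // leq_exp2l //; lia.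
  by rewrite /brc_len; lia.
Qed.
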